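(* For every $\delta\in(0,1)$ and $w\in(0,1)$ there exists a model class $\mathcal{M}=\{\mu,\nu\}$ of probability measures on $\mathcal{A}^\infty$ (for some finite alphabet $\mathcal{A}$) such that, with prior $w_\mu=w$, $w_\nu=1-w$ and Bayes mixture $\xi$, with $\mu$-probability at least $\delta$ it holds that $$D_\infty > \frac{1}{4\ln 2}\ln\frac{1}{\delta}\left(\ln\frac{1}{\delta}+2\ln\frac{1-w}{w}-3\ln 2\right).$$
   Context: $\mathcal{A}^\infty$ is the set of infinite sequences over $\mathcal{A}$ with the $\sigma$-algebra generated by cylinder sets $\Gamma_x=\{x\omega\}$, $x$ a finite string. For a probability measure $\rho$ write $\rho(x):=\rho(\Gamma_x)$, $\rho(y|x):=\rho(xy)/\rho(x)$. The Bayes mixture is $\xi(A):=w_\mu\mu(A)+w_\nu\nu(A)$. Logarithms are natural. For a finite string $x$, $d_x(\mu,\xi):=\sum_{a\in\mathcal{A}}\mu(a|x)\ln\frac{\mu(a|x)}{\xi(a|x)}$; for $\omega\in\mathcal{A}^\infty$, $d_t(\omega):=d_{\omega_{<t}}(\mu,\xi)$ where $\omega_{<t}=\omega_1\cdots\omega_{t-1}$, and $D_\infty:=\sum_{t=1}^\infty d_t$. *)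

From HB Require Import structures.
From mathcomp Require Import all_boot all_order all_algebra.
From mathcomp Require Import all_classical all_reals all_analysis.

Set Implicit Arguments.
Unset Strict Implicit.
Unset Printing Implicit Defensive.

Import Order.TTheory GRing.Theory Num.Theory.
Local Open Scope classical_set_scope.
Local Open Scope ring_scope.

Definition Aseq (k : nat) := nat -> 'I_k.+1.
HB.instance Definition _ (k : nat) := gen_eqMixin (Aseq k).
HB.instance Definition _ (k : nat) := gen_choiceMixin (Aseq k).
HB.instance Definition _ (k : nat) :=
  isPointed.Build (Aseq k) (fun _ : nat => (ord0 : 'I_k.+1)).

Definition cyl (k : nat) (x : seq 'I_k.+1) : set (Aseq k) :=
  [set om | forall i : nat, (i < size x)%N -> om i = nth ord0 x i].

Definition cylinders (k : nat) : set (set (Aseq k)) := range (@cyl k).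

Definition CylSpace (k : nat) := g_sigma_algebraType (@cylinders k).

Section KL.
Variables (R : realType) (k : nat).

Definition cylp (rho : probability (CylSpace k) R) (x : seq 'I_k.+1) : R :=
  fine (rho (cyl x : set (CylSpace k))).

Definition mixp (w : R) (mu nu : probability (CylSpace k) R)
  (x : seq 'I_k.+1) : R :=
  w * cylp mu x + (1 - w) * cylp nu x.

Definition condp (rho : seq 'I_k.+1 -> R) (y x : seq 'I_k.+1) : R :=
  rho (x ++ y) / rho x.

Definition dKL (w : R) (mu nu : probability (CylSpace k) R)
  (x : seq 'I_k.+1) : R :=
  \sum_(a : 'I_k.+1)
     condp (cylp mu) [:: a] x *
     ln (condp (cylp mu) [:: a] x / condp (mixp w mu nu) [:: a] x).

(* omega_{<t} for t = n+1 : the first n symbols *)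
Definition prefix (om : Aseq k) (n : nat) : seq 'I_k.+1 :=
  [seq om i | i <- iota 0 n].

Definition Dinf (w : R) (mu nu : probability (CylSpace k) R) (om : Aseq k)
  : \bar R :=
  (\sum_(0 <= n <oo) (dKL w mu nu (prefix om n))%:E)%E.

End KL.

From Pilot Require Import Defs.
From HB Require Import structures.
From mathcomp Require Import all_boot all_order all_algebra.
From mathcomp Require Import all_classical all_reals all_analysis.
From mathcomp Require Import ring lra zify.
Import Order.TTheory GRing.Theory Num.Theory.
Local Open Scope classical_set_scope.
Local Open Scope ring_scope.

(* Over the binary alphabet let nu be the Dirac measure at the all-zero
   sequence and mu a mixture of "spikes": the sequence whose only 1 sits at
   position i gets weight 2^-(i+1) for i < m, the all-zero sequence the
   remaining 2^-m.  While the prefix is all zeros and shorter than m, the next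
   symbol is a fair coin under mu whereas xi predicts 0 with probability close
   to 1, so the n-th step contributes more than (ln((1-w)/w) + (n-1) ln 2)/2
   to D_oo, and later steps contribute nothing.  Hence on every sequence
   starting with m-1 zeros, a set of mu-mass 2^-(m-1), D_oo exceeds the sum of
   this arithmetic progression, a quadratic in m.  Choosing
   m - 1 = floor(ln(1/delta)/ln 2) makes the mass at least delta and the
   quadratic larger than the claimed bound. *)

Section ArithmeticProgression.
Context {R : realFieldType}.

(* [ap_sum l c j] is the sum over n < j of (c + (n - 1) l) / 2. *)
Definition ap_sum (l c x : R) := x * (l / 4 * x + c / 2 - 3 * l / 4).

Lemma ap_sum_lt_sum (l c : R) (K : nat -> R) (m : nat) :
  (forall n, (n < m)%N -> (c + (n%:R - 1) * l) / 2 < K n) ->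
  forall j, (0 < j <= m)%N -> ap_sum l c j%:R < \sum_(n < j) K n.
Proof.
move=> HK; elim=> [//|j IH] /andP[_ jm]; rewrite big_ord_recr /=.
have Kj := HK j jm.
case: j IH jm Kj => [|j] IH jm Kj.
  by rewrite big_ord0 add0r; move: Kj; rewrite /ap_sum; lra.
have := IH (ltnW jm); move: Kj.
by rewrite /ap_sum -[j.+2]addn1 -[j.+1]addn1 !natrD; lra.
Qed.

Lemma ap_sum_lt_of_lt {l c x M S : R} : 0 < l -> 0 < x -> x < M ->
  ap_sum l c M < S -> 0 <= S -> ap_sum l c x < S.
Proof.
move=> l0 x0 xM HM S0.
have [slope_neg|slope_ge0] := ltP (l / 4 * x + c / 2 - 3 * l / 4) 0.
  by apply: lt_le_trans S0; rewrite /ap_sum pmulr_rlt0.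
apply: le_lt_trans HM; rewrite -subr_ge0.
have -> : ap_sum l c M - ap_sum l c x =
          (M - x) * (l / 4 * M + (l / 4 * x + c / 2 - 3 * l / 4)).
  by rewrite /ap_sum; ring.
have M0 : 0 <= l / 4 * M by rewrite mulr_ge0 ?divr_ge0 ?ltW // (lt_trans x0).
by apply: mulr_ge0; [rewrite subr_ge0 ltW | exact: addr_ge0].
Qed.

End ArithmeticProgression.

Section LogBounds.
Variable R : realType.

Definition halfpow (n : nat) : R := 2^-1 ^+ n.

Lemma halfpow_gt0 n : 0 < halfpow n.
Proof. by rewrite exprn_gt0 // invr_gt0. Qed.

Lemma halfpowS n : halfpow n.+1 = halfpow n / 2.
Proof. by rewrite /halfpow exprS mulrC. Qed.

Lemma ln_halfpow n : ln (halfpow n) = - (n%:R * ln 2).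
Proof. by rewrite lnXn ?invr_gt0 // lnV ?posrE // mulNrn mulr_natl. Qed.

Lemma halfpow_ge (delta : R) n : 0 < delta ->
  n%:R * ln 2 <= ln (1 / delta) -> delta <= halfpow n.
Proof.
move=> d0 nle; rewrite -ler_ln ?posrE ?halfpow_gt0 // ln_halfpow.
by rewrite lerNr -lnV ?posrE // -div1r.
Qed.

(* The one-step divergence between a fair coin and the mixture prediction,
   with [a = w mu(x)] and [b = (1 - w) nu(x)]. *)
Definition coin_kl (a b : R) :=
  2^-1 * ln ((a + b) / (a + 2 * b)) + 2^-1 * ln ((a + b) / a).

Lemma coin_kl_bounds (a b : R) : 0 < a -> 0 < b ->
  0 <= coin_kl a b /\ 2^-1 * ln (b / (2 * a)) < coin_kl a b.
Proof.
move=> a0 b0.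
have ab0 : 0 < a + b by rewrite addr_gt0.
have a2b0 : 0 < a + 2 * b by rewrite addr_gt0 // mulr_gt0.
rewrite /coin_kl -mulrDr -lnM ?posrE ?divr_gt0 //.
set P := (a + b) / (a + 2 * b) * ((a + b) / a).
have P_ge1 : 1 <= P.
  rewrite -subr_ge0.
  have -> : P - 1 = b ^+ 2 / (a * (a + 2 * b)) by rewrite /P; field; rewrite ?gt_eqF.
  by rewrite divr_ge0 ?sqr_ge0 // mulr_ge0 // ltW.
have P_gt : b / (2 * a) < P.
  rewrite -subr_gt0.
  have -> : P - b / (2 * a) = (2 * a + 3 * b) / (2 * (a + 2 * b)).
    by rewrite /P; field; rewrite ?gt_eqF ?pnatr_eq0.
  by rewrite divr_gt0 ?addr_gt0 ?mulr_gt0.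
split; first by rewrite mulr_ge0 ?invr_ge0 ?ln_ge0.
have P0 : 0 < P by apply: lt_le_trans P_ge1.
have ratio0 : 0 < b / (2 * a) by rewrite divr_gt0 ?mulr_gt0.
by rewrite ltr_pM2l ?invr_gt0 // ltr_ln ?posrE.
Qed.

End LogBounds.
Arguments coin_kl {R}.

Lemma nseq_cat1 (X : Type) n (x : X) : nseq n x ++ [:: x] = nseq n.+1 x.
Proof. by elim: n => //= n ->. Qed.

Section SpikeModel.
Variable R : realType.
Local Notation T := (CylSpace 1).

Definition zeros : T := fun _ => ord0.

(* For [i >= m] the spike degenerates to the all-zero sequence. *)
Definition spike (m i : nat) : T :=
  fun t => if (t == i) && (i < m)%N then ord_max else ord0.

Definition spike_wt (m i : nat) : R :=
  if (i < m)%N then halfpow R i.+1 else halfpow R m.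

Lemma spike_wt_ge0 m i : 0 <= spike_wt m i.
Proof. by rewrite /spike_wt; case: ifP => _; apply/ltW/halfpow_gt0. Qed.

Lemma sum_spike_wt_from m t : (t <= m)%N ->
  \sum_(t <= i < m.+1) spike_wt m i = halfpow R t.
Proof.
move=> tm; rewrite -(subKn tm); elim: (m - t)%N (leq_subr t m) => [|d IH] dm.
  by rewrite subn0 big_nat1 /spike_wt ltnn.
have Sd : (m - d.+1).+1 = (m - d)%N by lia.
rewrite big_ltn; last lia.
rewrite Sd IH 1?ltnW // /spike_wt ifT; last lia.
by rewrite -Sd !halfpowS; field.
Qed.

Definition spike_mix (m : nat) :=
  msum (fun i => mscale (NngNum (spike_wt_ge0 m i)) (@dirac _ T (spike m i) R))
    m.+1.

Lemma spike_mixE m A :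
  spike_mix m A = (\sum_(i < m.+1) spike_wt m i * (spike m i \in A)%:R)%:E.
Proof.
rewrite /spike_mix /msum -sumEFin; apply: eq_bigr => i _.
by rewrite -[RHS]/((spike_wt m i)%:E * \d_(spike m i) A)%E diracE -EFinM.
Qed.

Lemma spike_mix_setT m : spike_mix m setT = 1%E.
Proof.
rewrite spike_mixE.
under eq_bigr do rewrite in_setT mulr1.
by rewrite -(big_mkord xpredT (spike_wt m)) sum_spike_wt_from.
Qed.

HB.instance Definition _ m := Measure.on (spike_mix m).
HB.instance Definition _ m :=
  Measure_isProbability.Build _ _ _ (spike_mix m) (spike_mix_setT m).

Lemma spike_mix_ge_from m t (A : set T) : (t <= m)%N ->
  (forall i, (t <= i <= m)%N -> spike m i \in A) ->
  ((halfpow R t)%:E <= spike_mix m A)%E.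
Proof.
move=> tm tA; rewrite spike_mixE lee_fin.
rewrite -(big_mkord xpredT (fun i => spike_wt m i * (spike m i \in A)%:R)).
rewrite (@big_cat_nat _ _ _ t 0 m.+1) // ?(leqW tm) // -(@sum_spike_wt_from m t tm).
rewrite -[X in X <= _]add0r lerD //.
  by rewrite sumr_ge0 // => i _; rewrite mulr_ge0 ?spike_wt_ge0.
by apply: ler_sum_nat => i /andP[ti im]; rewrite tA ?ti // mulr1.
Qed.

Lemma spike_in_cyl_zeros m i j :
  (spike m i \in cyl (nseq j ord0)) = ~~ ((i < j) && (i < m))%N.
Proof.
case: (boolP ((i < j) && (i < m))%N) => /= H.
  apply/negP; rewrite in_setE => /(_ i).
  rewrite size_nseq nth_nseq /spike eqxx.
  by case/andP: H => -> -> /(_ isT).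
apply/idP; rewrite in_setE => t; rewrite size_nseq nth_nseq => tj; rewrite tj.
rewrite /spike; case: (eqVneq t i) => [ti|] //=; subst t.
by move: H; rewrite tj /=; case: (i < m)%N.
Qed.

Lemma spike_in_cyl_zeros_one m i j :
  (spike m i \in cyl (nseq j ord0 ++ [:: ord_max])) = ((i == j) && (j < m))%N.
Proof.
case: (boolP ((i == j) && (j < m))%N) => /= H.
  case/andP: H => /eqP -> jm.
  apply/idP; rewrite in_setE => t; rewrite size_cat size_nseq addn1 ltnS => tj.
  rewrite nth_cat size_nseq /spike jm andbT.
  case: (ltngtP t j) tj => // [tj _|-> _]; last by rewrite subnn.
  by rewrite nth_nseq tj.
apply/negbTE/negP; rewrite in_setE => /(_ j).
rewrite size_cat size_nseq addn1 ltnS leqnn nth_cat size_nseq ltnn subnn /=.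
move=> /(_ isT); rewrite /spike.
case: (eqVneq j i) H => [<-|/negbTE ji _]; rewrite ?eqxx ?ji /=.
  by move=> /negbTE -> /(congr1 val).
by move/(congr1 val).
Qed.

Lemma cylp_spike_mix m x :
  cylp (spike_mix m) x = \sum_(i < m.+1) spike_wt m i * (spike m i \in cyl x)%:R.
Proof. by rewrite -[LHS]/(fine (spike_mix m (cyl x))) spike_mixE. Qed.

Lemma cylp_spike_mix_zeros m j :
  cylp (spike_mix m) (nseq j ord0) = halfpow R (minn j m).
Proof.
rewrite cylp_spike_mix.
under eq_bigr do rewrite spike_in_cyl_zeros.
rewrite -(big_mkord xpredT
  (fun i => spike_wt m i * (~~ ((i < j)%N && (i < m)%N))%:R)).
rewrite (@big_cat_nat _ _ _ (minn j m)) //= ?leq_min ?leqnSn ?leqW ?geq_minr //.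
rewrite big1_seq ?add0r => [|i]; last first.
  move=> /andP[_]; rewrite mem_index_iota leq_min.
  by move=> /and3P[_ -> ->]; rewrite mulr0.
rewrite -(@sum_spike_wt_from m _ (geq_minr j m)); apply: eq_big_nat => i /andP[ji _].
by move: ji; rewrite geq_min => /orP[] /leq_gtF ->; rewrite ?andbF mulr1.
Qed.

Lemma cylp_spike_mix_zeros_one m j :
  cylp (spike_mix m) (nseq j ord0 ++ [:: ord_max]) =
  if (j < m)%N then halfpow R j.+1 else 0.
Proof.
rewrite cylp_spike_mix.
under eq_bigr do rewrite spike_in_cyl_zeros_one.
case: ifP => jm; last by rewrite big1 // => i _; rewrite andbF mulr0.
rewrite (bigD1 (Ordinal (ltnW jm : (j < m.+1)%N))) //= eqxx /= mulr1.
rewrite big1 ?addr0 ?/spike_wt ?jm // => i.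
by rewrite andbT -val_eqE /= => /negbTE ->; rewrite mulr0.
Qed.

Lemma cylp_dirac_zeros x : @cylp R 1 \d_zeros x = (zeros \in cyl x)%:R.
Proof. by rewrite -[LHS]/(fine (\d_zeros (cyl x))) diracE. Qed.

Lemma zeros_in_cyl_zeros j : zeros \in cyl (nseq j ord0).
Proof. by apply/idP; rewrite in_setE => t; rewrite size_nseq nth_nseq => ->. Qed.

Lemma zeros_in_cylP (x : seq 'I_2) : zeros \in cyl x -> x = nseq (size x) ord0.
Proof.
rewrite in_setE => H; apply: (@eq_from_nth _ ord0); rewrite ?size_nseq // => i ix.
by rewrite nth_nseq ix -H.
Qed.

Lemma zeros_in_cyl_cat (x y : seq 'I_2) : zeros \in cyl (x ++ y) -> zeros \in cyl x.
Proof.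
by rewrite !in_setE => H t tx; rewrite H ?size_cat ?ltn_addr // nth_cat tx.
Qed.

Lemma zeros_notin_cyl_zeros_one j : zeros \notin cyl (nseq j ord0 ++ [:: ord_max]).
Proof.
apply/negP => /zeros_in_cylP; rewrite size_cat size_nseq addn1 -nseq_cat1.
by move/eqP; rewrite eqseq_cat ?size_nseq // eqxx.
Qed.

Lemma spike_mix_neq_dirac m : (0 < m)%N ->
  (spike_mix m : set T -> \bar R) <> (\d_zeros : probability T R).
Proof.
move=> m0 E.
have := congr1 (fun rho : set T -> \bar R =>
  fine (rho (cyl (nseq 0 ord0 ++ [:: ord_max])))) E.
rewrite spike_mixE /dirac /= indicE (negbTE (zeros_notin_cyl_zeros_one 0)).
rewrite -cylp_spike_mix (cylp_spike_mix_zeros_one m 0) m0.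
by move/eqP; rewrite gt_eqF ?halfpow_gt0.
Qed.

Variables (w : R).
Hypothesis w0 : 0 < w.
Hypothesis w1 : w < 1.
Local Notation D m := (dKL w (spike_mix m) \d_zeros).

(* Off the zero sequence nu vanishes, so xi is proportional to mu. *)
Lemma dKL_off_zeros m x : zeros \notin cyl x -> D m x = 0.
Proof.
move=> zx; rewrite /dKL big1 // => a _.
have zxa : zeros \notin cyl (x ++ [:: a]).
  by apply: contra zx; apply: zeros_in_cyl_cat.
rewrite /condp /mixp !cylp_dirac_zeros (negbTE zx) (negbTE zxa) !mulr0 !addr0.
set A := cylp _ (x ++ _); set B := cylp _ x.
have -> : w * A / (w * B) = A / B by rewrite invfM mulrACA divff ?gt_eqF // mul1r.
have [->|AB] := eqVneq (A / B) 0; first by rewrite mul0r.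
by rewrite divff // ln1 mulr0.
Qed.

Lemma two_symbols (F : 'I_2 -> R) : \sum_(a : 'I_2) F a = F ord0 + F ord_max.
Proof. by rewrite big_ord_recl big_ord1; congr (_ + F _); apply: val_inj. Qed.

Lemma dKL_zeros_late m n : (m <= n)%N -> D m (nseq n ord0) = 0.
Proof.
move=> mn; rewrite /dKL two_symbols /condp /mixp !cylp_dirac_zeros nseq_cat1.
rewrite !cylp_spike_mix_zeros cylp_spike_mix_zeros_one ltnNge mn.
rewrite !zeros_in_cyl_zeros (negbTE (zeros_notin_cyl_zeros_one n)) /=.
rewrite !(minn_idPr _) ?(leqW mn) // !mul0r mulr1 addr0.
rewrite divff ?gt_eqF ?halfpow_gt0 //.
have X0 : 0 < w * halfpow R m + (1 - w).
  by rewrite addr_gt0 ?mulr_gt0 ?halfpow_gt0 ?subr_gt0.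
by rewrite divff ?gt_eqF // divr1 ln1 mulr0.
Qed.

Lemma dKL_zeros_early m n : (n < m)%N ->
  D m (nseq n ord0) = coin_kl (w * halfpow R n) (1 - w).
Proof.
move=> nm; rewrite /dKL two_symbols /condp /mixp !cylp_dirac_zeros nseq_cat1.
rewrite !cylp_spike_mix_zeros cylp_spike_mix_zeros_one nm.
rewrite !zeros_in_cyl_zeros (negbTE (zeros_notin_cyl_zeros_one n)) /=.
rewrite !(minn_idPl _) ?(ltnW nm) // halfpowS.
have u0 := halfpow_gt0 R n; set u := halfpow R n.
have b0 : 0 < 1 - w by rewrite subr_gt0.
have X0 : 0 < w * u + (1 - w) by rewrite addr_gt0 ?mulr_gt0.
have Y0 : 0 < w * u + 2 * (1 - w) by rewrite addr_gt0 ?mulr_gt0.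
rewrite /coin_kl; congr (_ * ln _ + _ * ln _); field.
all: by rewrite ?(gt_eqF u0) ?(gt_eqF w0) ?(gt_eqF X0) ?(gt_eqF Y0).
Qed.

Lemma dKL_zeros_bounds m n : (n < m)%N ->
  0 <= D m (nseq n ord0) /\
  (ln ((1 - w) / w) + (n%:R - 1) * ln 2) / 2 < D m (nseq n ord0).
Proof.
move=> nm; rewrite dKL_zeros_early //.
have b0 : 0 < 1 - w by rewrite subr_gt0.
have [-> step] := @coin_kl_bounds R _ _ (mulr_gt0 w0 (halfpow_gt0 R n)) b0.
split=> //; apply: le_lt_trans step.
have h0 := halfpow_gt0 R n.
have wu0 : 0 < w * halfpow R n by rewrite mulr_gt0.
have wu2 : 0 < 2 * (w * halfpow R n) by rewrite mulr_gt0.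
have -> : ln ((1 - w) / (2 * (w * halfpow R n))) =
          ln ((1 - w) / w) + (n%:R - 1) * ln 2.
  by rewrite !ln_div ?posrE // !lnM ?posrE // ln_halfpow; ring.
by rewrite [_ / 2]mulrC.
Qed.

Lemma size_prefix (om : T) n : size (Defs.prefix om n) = n.
Proof. by rewrite size_map size_iota. Qed.

Lemma nth_prefix (om : T) n i : (i < n)%N -> nth ord0 (Defs.prefix om n) i = om i.
Proof. by move=> ii; rewrite (nth_map 0%N) ?size_iota // nth_iota. Qed.

Lemma prefix_zeros n : Defs.prefix zeros n = nseq n ord0.
Proof.
apply: (@eq_from_nth _ ord0); rewrite ?size_prefix ?size_nseq // => i ii.
by rewrite nth_prefix // nth_nseq ii.
Qed.

Lemma dKL_late m x : (m <= size x)%N -> D m x = 0.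
Proof.
move=> mx; have [/zeros_in_cylP xE|] := boolP (zeros \in cyl x).
  by rewrite xE dKL_zeros_late.
exact: dKL_off_zeros.
Qed.

Lemma eseries_eventually0 (u : nat -> R) N : (forall n, (N <= n)%N -> u n = 0) ->
  (\sum_(0 <= n <oo) (u n)%:E)%E = (\sum_(n < N) u n)%:E.
Proof.
move=> u0; apply: cvg_lim => //; apply: cvg_near_cst.
near=> n; rewrite sumEFin; congr EFin.
rewrite (@big_cat_nat _ _ _ N) //=; last by near: n; exact: nbhs_infty_ge.
rewrite [X in _ + X]big1_seq ?addr0 ?big_mkord // => i.
by move=> /andP[_]; rewrite mem_index_iota => /andP[Ni _]; rewrite u0.
Unshelve. all: by end_near. Qed.

(* d_t = 0 for t > m, so D_oo only depends on the first m - 1 symbols. *)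
Lemma Dinf_eq m (om om' : T) : (forall i, (i.+1 < m)%N -> om i = om' i) ->
  Dinf w (spike_mix m) \d_zeros om = Dinf w (spike_mix m) \d_zeros om'.
Proof.
move=> H; rewrite /Dinf.
have E n : D m (Defs.prefix om n) = D m (Defs.prefix om' n).
  case: (ltnP n m) => nm; last by rewrite !dKL_late ?size_prefix.
  congr (D m _); apply/eq_in_map => i.
  by rewrite mem_iota add0n => /andP[_ ii]; apply: H; exact: leq_ltn_trans ii nm.
by under eq_fun do under eq_bigr do rewrite E.
Qed.

Lemma Dinf_zeros m :
  Dinf w (spike_mix m) \d_zeros zeros = (\sum_(n < m) D m (nseq n ord0))%:E.
Proof.
rewrite /Dinf (@eseries_eventually0 (fun n => D m (Defs.prefix zeros n)) m).
  by under eq_bigr do rewrite prefix_zeros.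
by move=> n mn; rewrite dKL_late // size_prefix.
Qed.

Lemma Dinf_spike m i : (m <= i.+1)%N ->
  Dinf w (spike_mix m) \d_zeros (spike m i) =
  Dinf w (spike_mix m) \d_zeros zeros.
Proof.
move=> mi; apply: Dinf_eq => j jm; rewrite /spike /zeros.
by case: eqVneq => // ji; subst j; move: jm; rewrite ltnNge mi.
Qed.

Lemma Dinf_zeros_gt m x : 0 < x -> x < m%:R ->
  ((ap_sum (ln 2) (ln ((1 - w) / w)) x)%:E < Dinf w (spike_mix m) \d_zeros zeros)%E.
Proof.
move=> x0 xm; rewrite Dinf_zeros lte_fin.
have m0 : (0 < m)%N by rewrite -(ltr0n R); exact: lt_trans xm.
have l0 : 0 < ln (2 : R) by rewrite ln_gt0 // ltr1n.
apply: (ap_sum_lt_of_lt l0 x0 xm); last first.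
  by apply: sumr_ge0 => n _; case: (dKL_zeros_bounds _ _ (ltn_ord n)).
apply: (@ap_sum_lt_sum _ _ _ (fun n => D m (nseq n ord0)) m).
  by move=> n /(dKL_zeros_bounds _ _)[].
by rewrite m0 leqnn.
Qed.

(* By [Dinf_eq], every event about D_oo is a finite union of cylinders of
   length m. *)
Lemma measurable_Dinf m (P : \bar R -> Prop) :
  measurable [set om : T | P (Dinf w (spike_mix m) \d_zeros om)].
Proof.
set E := [set om : T | _].
pose ext (t : m.-tuple 'I_2) : T := fun i => nth ord0 t i.
have -> : E = \bigcup_(t in [set: m.-tuple 'I_2]) (cyl t `&` [set _ | E (ext t)]).
  apply/seteqP; split => om.
    move=> Eom; have pf : size (Defs.prefix om m) == m by rewrite size_prefix.
    exists (Tuple pf) => //; split.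
      by move=> i; rewrite /= size_prefix => im; rewrite nth_prefix.
    rewrite /E /= -(@Dinf_eq m om) // => i im.
    by rewrite /ext /= nth_prefix // ltnW.
  case=> t _ [Ct Et]; rewrite /E /= (@Dinf_eq m om (ext t)) //.
  by move=> i im; rewrite /ext Ct // size_tuple ltnW.
apply: fin_bigcup_measurable; first exact: finite_finset.
move=> t _; apply: measurableI; first by apply: sub_sigma_algebra; exists (tval t).
have [Et|nEt] := pselect (E (ext t)).
  by rewrite (propT Et); exact: measurableT.
by rewrite (propF nEt); exact: measurable0.
Qed.

End SpikeModel.

Theorem proposition1 (R : realType) (delta w : R) :
  0 < delta < 1 -> 0 < w < 1 ->
  exists (k : nat) (mu nu : probability (CylSpace k) R),
    (mu : set (CylSpace k) -> \bar R) <> nu /\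
    let E := [set om : CylSpace k |
               ((1 / (4 * ln 2)) * ln (1 / delta) *
                  (ln (1 / delta) + 2 * ln ((1 - w) / w) - 3 * ln 2))%:E
               < Dinf w mu nu om]%E in
    measurable E /\ (delta%:E <= mu E)%E.
Proof.
move=> /andP[d0 d1] /andP[w0 w1].
set l := ln (2 : R); set L := ln (1 / delta).
have l0 : 0 < l by rewrite ln_gt0 // ltr1n.
have L0 : 0 < L by rewrite ln_gt0 // div1r invf_gt1.
set t := Num.truncn (L / l).
have /andP[tle lelt] := truncn_itv (divr_ge0 (ltW L0) (ltW l0)).
exists 1%N, (spike_mix R t.+1), \d_zeros; split; first exact: spike_mix_neq_dirac.
move=> E; split; first exact: (@measurable_Dinf R w w0 w1 _ (fun d => (_ < d)%E)).
have tail_in_E i : (t <= i <= t.+1)%N -> spike t.+1 i \in E.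
  case/andP=> ti _; rewrite in_setE /E /= (Dinf_spike _ _ w0 w1) //.
  have -> : 1 / (4 * l) * L * (L + 2 * ln ((1 - w) / w) - 3 * l) =
            ap_sum l (ln ((1 - w) / w)) (L / l).
    by rewrite /ap_sum; field; rewrite gt_eqF.
  exact: (Dinf_zeros_gt _ _ w0 w1 _ _ (divr_gt0 L0 l0) lelt).
apply: le_trans (@spike_mix_ge_from R _ t E (leqnSn t) tail_in_E).
by rewrite lee_fin halfpow_ge // -ler_pdivlMr.
Qed.
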